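(* Let $\Phi(\omega)=\frac{\alpha\omega+\beta}{\gamma\omega+\delta}$ with $\alpha,\beta,\gamma,\delta\in\mathbb{R}$, $\alpha\delta-\beta\gamma=1$, and let $R$ be a real rational function such that $\Phi\circ R$ is a rational function (i.e. $R$ is not the constant $-\delta/\gamma$). Then $$\operatorname{Ind}_{\mathbb{P}\mathbb{R}}(\Phi\circ R)=\operatorname{Ind}_{\mathbb{P}\mathbb{R}}(R).$$
   Context: For a real rational function $R$ and a real pole $\omega_0$ of $R$ of odd order, $\operatorname{Ind}_{\omega_0}(R)=+1$ if $R(\omega_0-0)<0<R(\omega_0+0)$ and $-1$ if $R(\omega_0-0)>0>R(\omega_0+0)$; $\operatorname{Ind}_{-\infty}^{+\infty}(R)$ is the sum of these over all real poles of $R$ of odd order. Writing $R=f_1/f_0$, $R$ has a pole at $\infty$ of order $\deg f_1-\deg f_0$ when this is positive; if this order is odd, $\operatorname{Ind}_\infty(R)=+1$ if $R(+\infty)<0<R(-\infty)$ and $-1$ if $R(+\infty)>0>R(-\infty)$; otherwise $\operatorname{Ind}_\infty(R)=0$. Then $\operatorname{Ind}_{\mathbb{P}\mathbb{R}}(R)=\operatorname{Ind}_{-\infty}^{+\infty}(R)+\operatorname{Ind}_\infty(R)$ (constants have index $0$). *)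

From HB Require Import structures.
From mathcomp Require Import all_boot all_order all_algebra.
From mathcomp Require Import polyrcf.
From mathcomp Require Import boolp reals.
Set Implicit Arguments. Unset Strict Implicit. Unset Printing Implicit Defensive.
Import Order.TTheory GRing.Theory Num.Theory.
Local Open Scope ring_scope.

Section CauchyIndex.
Variable R : realType.

(* A real rational function is represented by a pair (f1, f0) of real
   polynomials with f0 != 0, standing for f1 / f0. *)
Definition rat_eval (f1 f0 : {poly R}) (x : R) : R := f1.[x] / f0.[x].

(* order of w as a pole of f1/f0 (positive iff w is a pole); independent of
   the representation (f1, f0) *)
Definition pole_order (f1 f0 : {poly R}) (w : R) : int := (mup w f0)%:Z - (mup w f1)%:Z.

Definition odd_pole (f1 f0 : {poly R}) (w : R) : bool :=
  [&& f1 != 0, 0 < pole_order f1 f0 w & odd `|pole_order f1 f0 w|%N].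

Definition left_neg (r : R -> R) (w : R) := exists2 e : R, 0 < e & forall y, w - e < y < w -> r y < 0.
Definition left_pos (r : R -> R) (w : R) := exists2 e : R, 0 < e & forall y, w - e < y < w -> 0 < r y.
Definition right_neg (r : R -> R) (w : R) := exists2 e : R, 0 < e & forall y, w < y < w + e -> r y < 0.
Definition right_pos (r : R -> R) (w : R) := exists2 e : R, 0 < e & forall y, w < y < w + e -> 0 < r y.

Definition pinfty_neg (r : R -> R) := exists M : R, forall y, M < y -> r y < 0.
Definition pinfty_pos (r : R -> R) := exists M : R, forall y, M < y -> 0 < r y.
Definition minfty_neg (r : R -> R) := exists M : R, forall y, y < M -> r y < 0.
Definition minfty_pos (r : R -> R) := exists M : R, forall y, y < M -> 0 < r y.

Definition Ind_at (f1 f0 : {poly R}) (w : R) : int :=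
  let r := rat_eval f1 f0 in
  if odd_pole f1 f0 w then
    if `[< left_neg r w /\ right_pos r w >] then 1
    else if `[< left_pos r w /\ right_neg r w >] then -1
    else 0
  else 0.

(* Ind_{-oo}^{+oo}(R): sum over all real poles of odd order; every pole of
   f1/f0 is a real root of f0, and rootsR f0 lists them all (f0 != 0). *)
Definition Ind_real (f1 f0 : {poly R}) : int := \sum_(w <- rootsR f0) Ind_at f1 f0 w.

Definition inf_order (f1 f0 : {poly R}) : int := (size f1)%:Z - (size f0)%:Z.

Definition Ind_inf (f1 f0 : {poly R}) : int :=
  let r := rat_eval f1 f0 in
  if (0 < inf_order f1 f0) && odd `|inf_order f1 f0|%N then
    if `[< pinfty_neg r /\ minfty_pos r >] then 1
    else if `[< pinfty_pos r /\ minfty_neg r >] then -1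
    else 0
  else 0.

Definition Ind_PR (f1 f0 : {poly R}) : int := Ind_real f1 f0 + Ind_inf f1 f0.

End CauchyIndex.

From HB Require Import structures.
From mathcomp Require Import all_boot all_order all_algebra.
From mathcomp Require Import polyrcf polyorder qe_rcf_th.
From mathcomp Require Import boolp reals.
From mathcomp Require Import ring.
Set Implicit Arguments.
Unset Strict Implicit.
Unset Printing Implicit Defensive.

Import Order.TTheory GRing.Theory Num.Theory.
Local Open Scope ring_scope.

(* Ind_PR f1 f0 is the Cauchy index cindexR f1 f0 of the real-closed-field
   library (the sum of the jumps of f1/f0 at the real roots of f0) plus a jump
   at infinity. Both parts are unchanged under w |-> k w + t with k > 0 and
   under scaling f1 and f0 by the same constant. For the inversion
   w |-> -1/w, Cauchy's reciprocity (the step of Sturm's algorithm) says that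
   the finite parts for f1/f0 and f0/f1 add up to the total jump crossR (f0 f1)
   from -oo to +oo, which the jumps at infinity exactly compensate. Finally
   Phi w = a/c - 1/(c (c w + d)) when c != 0, and Phi w = (a/d) w + b/d with
   a/d = a^2 > 0 when c = 0. *)

Section SignsAndJumps.
Variable R : rcfType.
Implicit Types (p q : {poly R}) (k w x : R).

Lemma sgp_right_near p w : p != 0 ->
  exists2 e, 0 < e & forall y, w < y < w + e -> Num.sg p.[y] = sgp_right p w.
Proof.
move=> p_neq0; have w_lt : w < w + 1 by rewrite ltrDl.
have next_gt := next_root_gt w_lt p_neq0.
exists (next_root p w (w + 1) - w); first by rewrite subr_gt0.
move=> y /andP[w_lt_y y_lt]; apply: (sgr_neighpr (b := w + 1)).
by rewrite /neighpr in_itv /= w_lt_y -(subrK w (next_root _ _ _)) addrC.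
Qed.

Lemma sgp_left_near p w : p != 0 -> exists2 e, 0 < e &
  forall y, w - e < y < w -> Num.sg p.[y] = (-1) ^+ odd (\mu_w p) * sgp_right p w.
Proof.
move=> p_neq0; have w_gt : w - 1 < w by rewrite gtrBl.
have prev_lt := prev_root_lt w_gt p_neq0.
exists (w - prev_root p (w - 1) w); first by rewrite subr_gt0.
move=> y /andP[y_gt y_lt_w]; apply: (sgr_neighpl (a := w - 1)).
by rewrite /neighpl in_itv /= y_lt_w andbT; move: y_gt; rewrite opprB addrC subrK.
Qed.

Lemma sgp_right_sign p w : p != 0 ->
  sgp_right p w = (-1) ^+ (sgp_right p w < 0)%R.
Proof.
move=> p_neq0; have [e e_gt0 near] := sgp_right_near w p_neq0.
have w_lt : w < w + e by rewrite ltrDl.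
have [w_lt_y y_lt] := midf_lt w_lt.
have y_near : w < (w + (w + e)) / 2 < w + e by rewrite w_lt_y y_lt.
by rewrite -(near _ y_near) -[LHS]sgr_id sgr_def near // sgp_right_eq0 p_neq0.
Qed.

Lemma sgp_minfty_mul p q : p != 0 -> q != 0 ->
  sgp_minfty (p * q) = (-1) ^+ odd (size p + size q) * sgp_pinfty (p * q).
Proof.
move=> p_neq0 q_neq0; rewrite /sgp_minfty /sgp_pinfty sgrM sgrX sgrN1 size_mul //.
have : (1 < size p + size q)%N by rewrite -addn1 leq_add ?size_poly_gt0.
by rewrite -[in LHS]signr_odd; case: (size p + size q)%N => [|[|n]] //= _; rewrite negbK.
Qed.

Lemma crossR_mul p q : p != 0 -> q != 0 ->
  crossR (p * q) =
  if odd (size p + size q) then sgz (lead_coef p * lead_coef q) else 0.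
Proof.
move=> p_neq0 q_neq0; rewrite /crossR sgp_minfty_mul // /sgp_pinfty lead_coefM.
rewrite /variation -mulrA -expr2 sqr_sg mulf_neq0 ?lead_coef_eq0 // mulr1 sgz_sgr.
by case: odd; rewrite ?expr1 ?ltrN10 ?expr0 ?ltr10 ?mulr1 ?mulr0.
Qed.

Lemma jump_mu_le q p x : (\mu_x p <= \mu_x q)%N -> jump q p x = 0.
Proof. by rewrite /jump -subn_eq0 => /eqP ->; rewrite andbF. Qed.

Lemma jump_addZr k (f1 f0 : {poly R}) x : f0 != 0 ->
  jump (f1 + k *: f0) f0 x = jump f1 f0 x.
Proof.
move=> f0_neq0; have [->|k_neq0] := eqVneq k 0; first by rewrite scale0r addr0.
have [->|f1_neq0] := eqVneq f1 0.
  by rewrite add0r jump0p jump_mulCp jump_mu_le ?mulr0.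
have [mu_lt|mu_ge] := ltnP (\mu_x f1) (\mu_x f0).
  have mu_sum : \mu_x (f1 + k *: f0) = \mu_x f1 by rewrite mu_addr // mu_mulC.
  have sum_neq0 : f1 + k *: f0 != 0.
    apply: contraTneq mu_lt => /eqP; rewrite addr_eq0 => /eqP ->.
    by rewrite -leqNgt mu_opp mu_mulC.
  rewrite /jump sum_neq0 f1_neq0 mu_sum mulrDl addrC sgp_right_addp0 ?mulf_neq0 //.
  by rewrite -scalerAl mu_mulC // !mu_mul ?mulf_neq0 // ltn_add2r.
rewrite [RHS]jump_mu_le //.
have [->|sum_neq0] := eqVneq (f1 + k *: f0) 0; first by rewrite jump0p.
have f0_dvd_f1 : ('X - x%:P) ^+ \mu_x f0 %| f1.
  exact: dvdp_trans (dvdp_exp2l _ mu_ge) (root_mu _ _).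
by rewrite jump_mu_le // -root_le_mu // dvdp_add // dvdpZr // root_mu.
Qed.

Lemma rootsRZ k p : k != 0 -> rootsR (k *: p) = rootsR p.
Proof.
move=> k_neq0; have [->|p_neq0] := eqVneq p 0; first by rewrite scaler0.
have kp_neq0 : k *: p != 0 by rewrite scaler_eq0 negb_or k_neq0.
rewrite /rootsR rootsZ //; apply: rootsRP => x x_out.
  by have := le_cauchy_bound kp_neq0 x_out; rewrite rootZ.
by have := ge_cauchy_bound kp_neq0 x_out; rewrite rootZ.
Qed.

Lemma cindexR_mulCp k p q : cindexR (k *: p) q = sgz k * cindexR p q.
Proof.
by rewrite /cindexR big_distrr; apply: eq_bigr => x _; rewrite jump_mulCp.
Qed.

Lemma cindexR_inv p q : cindexR p q + cindexR q p = crossR (q * p).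
Proof.
have next_modE : cindexR (next_mod q p) p = - cindexR q p.
  rewrite /next_mod /cindexR -sumrN; apply: eq_bigr => x _.
  by rewrite jump_mulCp sgzN sgzX mulNr [in RHS]jump_mod.
by rewrite (cindexR_rec q p) next_modE subrK.
Qed.

End SignsAndJumps.

Section ProjectiveCauchyIndex.
Variable R : rcfType.
Implicit Types (a b d k : R).

(* The sign of f1/f0 at -oo when its pole at infinity has odd order. *)
Definition cindex_infty (f1 f0 : {poly R}) : int :=
  if (size f0 < size f1)%N && odd (size f1 - size f0)
  then - sgz (lead_coef f1 * lead_coef f0) else 0.

Definition cindexPR (f1 f0 : {poly R}) : int :=
  cindexR f1 f0 + cindex_infty f1 f0.

Lemma cindexPRZ k (f1 f0 : {poly R}) : k != 0 ->
  cindexPR (k *: f1) (k *: f0) = cindexPR f1 f0.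
Proof.
move=> k_neq0; have sgz_k2 : sgz k * sgz k = 1 by rewrite mulz_sg k_neq0.
rewrite /cindexPR /cindex_infty /cindexR rootsRZ // !size_scale // !lead_coefZ.
rewrite mulrACA sgzM (sgzM k) sgz_k2 mul1r; congr (_ + _).
by apply: eq_bigr => x _; rewrite jump_mulCp jump_pmulC mulrA sgz_k2 mul1r.
Qed.

Lemma cindexPRZl k (f1 f0 : {poly R}) : 0 < k ->
  cindexPR (k *: f1) f0 = cindexPR f1 f0.
Proof.
move=> k_gt0; have k_neq0 : k != 0 by rewrite gt_eqF.
rewrite /cindexPR /cindex_infty cindexR_mulCp size_scale // lead_coefZ.
by rewrite -mulrA sgzM gtr0_sgz // !mul1r.
Qed.

Lemma cindexPR_addZr k (f1 f0 : {poly R}) : f0 != 0 ->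
  cindexPR (f1 + k *: f0) f0 = cindexPR f1 f0.
Proof.
move=> f0_neq0; rewrite /cindexPR /cindexR; congr (_ + _).
  by apply: eq_bigr => x _; rewrite jump_addZr.
have [->|k_neq0] := eqVneq k 0; first by rewrite scale0r addr0.
rewrite /cindex_infty; have [deg_lt|deg_ge] := ltnP (size f0) (size f1).
  have deg_ltZ : (size (k *: f0) < size f1)%N by rewrite size_scale.
  by rewrite size_polyDl // lead_coefDl // deg_lt.
suff -> : (size f0 < size (f1 + k *: f0)%R)%N = false by [].
apply/negbTE; rewrite -leqNgt (leq_trans (size_polyD _ _)) //.
by rewrite geq_max deg_ge size_scale //=.
Qed.

Lemma cindexPR_inv (f1 f0 : {poly R}) : f1 != 0 -> f0 != 0 ->
  cindexPR (- f0) f1 = cindexPR f1 f0.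
Proof.
move=> f1_neq0 f0_neq0.
rewrite /cindexPR -scaleN1r cindexR_mulCp sgzN sgz1 mulN1r scaleN1r.
rewrite -[cindexR f0 f1](addKr (cindexR f1 f0)) cindexR_inv crossR_mul //.
rewrite /cindex_infty size_polyN lead_coefN mulNr sgzN [_ * lead_coef f0]mulrC.
case: (ltngtP (size f0) (size f1)) => [deg_lt|deg_gt|->] /=.
- by rewrite oddD (oddB (ltnW deg_lt)) addbC; case: (_ (+) _); ring.
- by rewrite oddD (oddB (ltnW deg_gt)); case: (_ (+) _); ring.
- by rewrite addnn odd_double; ring.
Qed.

Lemma cindexPR_affine a b d (f1 f0 : {poly R}) : 0 < a * d -> f0 != 0 ->
  cindexPR (a *: f1 + b *: f0) (d *: f0) = cindexPR f1 f0.
Proof.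
move=> ad_gt0 f0_neq0.
have d_neq0 : d != 0 by apply: contraTneq ad_gt0 => ->; rewrite mulr0 ltxx.
have d2_gt0 : 0 < d ^+ 2 by rewrite exprn_even_gt0 // d_neq0 orbT.
have a_div_d_gt0 : 0 < a / d by rewrite -(pmulr_lgt0 _ d2_gt0) expr2 mulrA divfK.
have -> : a *: f1 + b *: f0 = d *: ((a / d) *: f1 + (b / d) *: f0).
  by rewrite scalerDr !scalerA ![d * (_ / d)]mulrC !divfK.
by rewrite cindexPRZ // cindexPR_addZr // cindexPRZl.
Qed.

End ProjectiveCauchyIndex.

Section IndexAsCauchyIndex.
Variable R : realType.
Implicit Types (p : {poly R}) (r : R -> R) (w y : R).

Lemma mup_multiplicity w p : p != 0 -> mup w p = \mu_w p.
Proof.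
by move=> p_neq0; apply/eqP; rewrite eqn_leq mup_leq // root_muN // mup_geq // root_mu.
Qed.

Lemma subz_gt0_odd (m n : nat) :
  (0 < m%:Z - n%:Z) && odd `|m%:Z - n%:Z|%N = (n < m)%N && odd (m - n).
Proof.
rewrite subr_gt0 ltz_nat; case: ltnP => [n_lt_m|_]; last by [].
by rewrite subzn ?absz_nat // ltnW.
Qed.

Lemma odd_poleE (f1 f0 : {poly R}) w :
  f0 != 0 -> odd_pole f1 f0 w = (f1 != 0) && odd (\mu_w f0 - \mu_w f1).
Proof.
move=> f0_neq0; rewrite /odd_pole /pole_order.
have [->|f1_neq0] := eqVneq f1 0; first by [].
rewrite !mup_multiplicity // subz_gt0_odd andb_idl //.
by rewrite -subn_gt0; case: (_ - _)%N.
Qed.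

Lemma sgr_rat_eval (f1 f0 : {poly R}) y :
  Num.sg (rat_eval f1 f0 y) = Num.sg (f1 * f0).[y].
Proof. by rewrite /rat_eval hornerM !sgrM sgrV. Qed.

Lemma right_pos_neg r w : right_pos r w -> right_neg r w -> False.
Proof.
move=> [e1 e1_gt0 pos] [e2 e2_gt0 neg]; set e := Order.min e1 e2.
have w_lt : w < w + e by rewrite ltrDl lt_min e1_gt0.
have [w_lt_y y_lt] := midf_lt w_lt; set y := (w + (w + e)) / 2 in w_lt_y y_lt.
have y_near e' : e <= e' -> w < y < w + e'.
  by move=> e_le; rewrite w_lt_y (lt_le_trans y_lt) // lerD2l.
suff : r y < r y by rewrite ltxx.
by rewrite (lt_trans (neg y _) (pos y _)) // y_near // ge_min lexx ?orbT.
Qed.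

Lemma pinfty_pos_neg r : pinfty_pos r -> pinfty_neg r -> False.
Proof.
move=> [M1 pos] [M2 neg]; pose y := Num.max M1 M2 + 1.
have M_lt_y M : M <= Num.max M1 M2 -> M < y.
  by move=> M_le; rewrite (le_lt_trans M_le) // ltrDl.
suff : r y < r y by rewrite ltxx.
by rewrite (lt_trans (neg y _) (pos y _)) // M_lt_y // le_max lexx ?orbT.
Qed.

Lemma sign_change_index r w (s : bool) el er : 0 < el -> 0 < er ->
  (forall y, w - el < y < w -> Num.sg (r y) = - (-1) ^+ s) ->
  (forall y, w < y < w + er -> Num.sg (r y) = (-1) ^+ s) ->
  (if `[< left_neg r w /\ right_pos r w >] then 1
   else if `[< left_pos r w /\ right_neg r w >] then -1 else 0 : int) = (-1) ^+ s.
Proof.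
move=> el_gt0 er_gt0 left right.
case: s in left right *; rewrite ?expr1 ?opprK ?expr0 in left right *.
- have right_neg_r : right_neg r w by exists er => // y /right/eqP; rewrite sgr_cp0.
  rewrite asboolF; last by case=> _ /right_pos_neg; apply.
  rewrite asboolT //; split=> //.
  by exists el => // y /left/eqP; rewrite sgr_cp0.
- rewrite asboolT //; split.
    by exists el => // y /left/eqP; rewrite sgr_cp0.
  by exists er => // y /right/eqP; rewrite sgr_cp0.
Qed.

Lemma sign_change_index_infty r (s : bool) Ml Mr :
  (forall y, y < Ml -> Num.sg (r y) = (-1) ^+ s) ->
  (forall y, Mr < y -> Num.sg (r y) = - (-1) ^+ s) ->
  (if `[< pinfty_neg r /\ minfty_pos r >] then 1
   else if `[< pinfty_pos r /\ minfty_neg r >] then -1 else 0 : int) = (-1) ^+ s.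
Proof.
move=> left right.
case: s in left right *; rewrite ?expr1 ?opprK ?expr0 in left right *.
- have pinfty_pos_r : pinfty_pos r by exists Mr => y /right/eqP; rewrite sgr_cp0.
  rewrite asboolF; last by case=> /(pinfty_pos_neg pinfty_pos_r).
  rewrite asboolT //; split=> //.
  by exists Ml => y /left/eqP; rewrite sgr_cp0.
- rewrite asboolT //; split.
    by exists Mr => y /right/eqP; rewrite sgr_cp0.
  by exists Ml => y /left/eqP; rewrite sgr_cp0.
Qed.

Lemma Ind_at_odd_pole (f1 f0 : {poly R}) w : f0 != 0 -> odd_pole f1 f0 w ->
  Ind_at f1 f0 w = (-1) ^+ (sgp_right (f1 * f0) w < 0)%R.
Proof.
move=> f0_neq0 pole; rewrite /Ind_at pole.
move: pole; rewrite odd_poleE // => /andP[f1_neq0 odd_mu_diff].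
have P_neq0 : f1 * f0 != 0 by rewrite mulf_neq0.
have odd_mu : odd (\mu_w (f1 * f0)).
  have mu_lt : (\mu_w f1 < \mu_w f0)%N.
    by move: odd_mu_diff; rewrite -subn_gt0; case: (_ - _)%N.
  by rewrite mu_mul // oddD addbC -oddB // ltnW.
have [er er_gt0 right] := sgp_right_near w P_neq0.
have [el el_gt0 left] := sgp_left_near w P_neq0.
apply: (sign_change_index el_gt0 er_gt0) => y y_near; rewrite sgr_rat_eval.
  by rewrite left // odd_mu expr1 mulN1r -sgp_right_sign.
by rewrite right // -sgp_right_sign.
Qed.

Lemma Ind_atE (f1 f0 : {poly R}) w : f0 != 0 -> Ind_at f1 f0 w = jump f1 f0 w.
Proof.
move=> f0_neq0; rewrite /jump /= -odd_poleE //.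
have [pole|no_pole] := boolP (odd_pole f1 f0 w); first by rewrite Ind_at_odd_pole.
by rewrite /Ind_at (negbTE no_pole).
Qed.

Lemma Ind_infE (f1 f0 : {poly R}) : f0 != 0 ->
  Ind_inf f1 f0 = cindex_infty f1 f0.
Proof.
move=> f0_neq0; rewrite /Ind_inf /inf_order subz_gt0_odd /cindex_infty.
case: ifP => [/andP[deg_lt odd_deg]|_]; last by [].
have f1_neq0 : f1 != 0 by rewrite -size_poly_gt0 (leq_ltn_trans _ deg_lt).
have P_neq0 : f1 * f0 != 0 by rewrite mulf_neq0.
set B := cauchy_bound (f1 * f0); set L := lead_coef f1 * lead_coef f0.
have sg_pinfty y : B < y -> Num.sg (rat_eval f1 f0 y) = Num.sg L.
  move=> B_lt_y; have y_in : y \in `[B, +oo[ by rewrite in_itv /= andbT ltW.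
  rewrite sgr_rat_eval (sgp_pinftyP (ge_cauchy_bound P_neq0) y_in).
  by rewrite /sgp_pinfty lead_coefM.
have sg_minfty y : y < - B -> Num.sg (rat_eval f1 f0 y) = - Num.sg L.
  move=> y_lt_B; have y_in : y \in `]-oo, - B] by rewrite in_itv /= ltW.
  rewrite sgr_rat_eval (sgp_minftyP (le_cauchy_bound P_neq0) y_in).
  rewrite sgp_minfty_mul // oddD -(oddB (ltnW deg_lt)) odd_deg mulN1r.
  by rewrite /sgp_pinfty lead_coefM.
have : L != 0 by rewrite mulf_neq0 ?lead_coef_eq0.
rewrite neq_lt => /orP[L_lt0|L_gt0].
  rewrite ltr0_sgz // opprK.
  apply: (sign_change_index_infty (s := false) (Ml := - B) (Mr := B)) => y.
    by move/sg_minfty ->; rewrite ltr0_sg // opprK.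
  by move/sg_pinfty ->; rewrite ltr0_sg.
rewrite gtr0_sgz //.
apply: (sign_change_index_infty (s := true) (Ml := - B) (Mr := B)) => y.
  by move/sg_minfty ->; rewrite gtr0_sg.
by move/sg_pinfty ->; rewrite gtr0_sg // opprK.
Qed.

Lemma Ind_PRE (f1 f0 : {poly R}) : f0 != 0 -> Ind_PR f1 f0 = cindexPR f1 f0.
Proof.
move=> f0_neq0; rewrite /Ind_PR /cindexPR Ind_infE // /Ind_real /cindexR.
by congr (_ + _); apply: eq_bigr => w _; apply: Ind_atE.
Qed.

End IndexAsCauchyIndex.

Theorem theorem59 (R : realType) (a b c d : R) (f1 f0 : {poly R}) :
  a * d - b * c = 1 ->
  f0 != 0 ->
  c *: f1 + d *: f0 != 0 ->
  Ind_PR (a *: f1 + b *: f0) (c *: f1 + d *: f0) = Ind_PR f1 f0.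
Proof.
move=> det f0_neq0 den_neq0; rewrite !Ind_PRE //.
have [c0|c_neq0] := eqVneq c 0.
  move: det den_neq0; rewrite c0 mulr0 subr0 scale0r !add0r => ad1 _.
  by rewrite cindexPR_affine // ad1 ltr01.
have -> : a *: f1 + b *: f0 = - (c^-1 *: f0) + (a / c) *: (c *: f1 + d *: f0).
  rewrite scalerDr !scalerA mulfVK // addrCA -scaleNr -scalerDl.
  have -> : b = (a * d - 1) / c by rewrite -det opprB addrC subrK mulfK.
  by congr (_ + _ *: _); field.
have cf0_neq0 : c^-1 *: f0 != 0 by rewrite scaler_eq0 invr_eq0 negb_or c_neq0.
by rewrite cindexPR_addZr // cindexPR_inv // cindexPR_affine // mulfV // ltr01.
Qed.
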